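(* Let $G$ be a finite group. Then the non-inverse graph $\Gamma_{NI}(G)$ is minimally edge connected if and only if either every non-identity element of $G$ is self-inverse, or no non-identity element of $G$ is self-inverse.
   Context: The non-inverse graph $\Gamma_{NI}(G)$ of a group $G$ is the simple undirected graph with vertex set $G$ in which two distinct elements $x,y$ are adjacent if and only if $y\neq x^{-1}$. An element $x$ is self-inverse if $x=x^{-1}$. For a connected graph $\Gamma$, an edge cut-set is a set $S$ of edges such that $\Gamma-S$ is disconnected or has just one vertex, and the edge connectivity $\kappa'(\Gamma)$ is the smallest size of an edge cut-set. $\Gamma$ is minimally edge connected if $\kappa'(\Gamma-\epsilon)=\kappa'(\Gamma)-1$ for every edge $\epsilon$ of $\Gamma$. *)

From HB Require Import structures.
From mathcomp Require Import all_boot all_fingroup.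
Set Implicit Arguments. Unset Strict Implicit. Unset Printing Implicit Defensive.

(* A simple undirected graph on the vertex set V (a finType) is given by its
   edge set E : {set {set V}}, each edge being a 2-element set {x, y}. *)

Definition adj (V : finType) (E : {set {set V}}) : rel V :=
  fun u v => [set u; v] \in E.

Definition connectedb (V : finType) (E : {set {set V}}) : bool :=
  [forall x : V, forall y : V, connect (adj E) x y].

Definition edge_cutset (V : finType) (E S : {set {set V}}) : bool :=
  (S \subset E) && (~~ connectedb (E :\: S) || (#|V| == 1)).

(* edge connectivity: smallest size of an edge cut-set
   (E itself is a cut-set whenever V is nonempty) *)
Definition edge_connectivity (V : finType) (E : {set {set V}}) : nat :=
  \big[minn/#|E|]_(S : {set {set V}} | edge_cutset E S) #|S|.

Definition min_edge_connected (V : finType) (E : {set {set V}}) : Prop :=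
  connectedb E /\
  forall e, e \in E -> edge_connectivity (E :\ e) = (edge_connectivity E).-1.

Definition NI_edges (gT : finGroupType) : {set {set gT}} :=
  [set [set x; y] | x in [set: gT], y in [set: gT] & (x != y) && (y != x^-1)%g].

From HB Require Import structures.
From mathcomp Require Import all_boot all_fingroup zify.
Set Implicit Arguments. Unset Strict Implicit. Unset Printing Implicit Defensive.

(* The non-inverse graph is the complete graph with the matching {x, x^-1} removed;
   the argument works for the analogous graph of any involution s of a finite set of
   size n. A cut (A, ~: A) of sizes a, b is crossed by all a * b pairs except those of
   the form {u, s u}, of which there are at most min(a, b); so every cut has at least
   n - 2 edges, and at least n - 1 when s is the identity. The degree of x is n - 1
   if s x = x and n - 2 otherwise. In the two pure cases the edge connectivity is
   therefore the minimum degree, and every edge has an endpoint of minimum degree,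
   so deleting it drops the connectivity by one. In the mixed case, deleting the
   edge {1, u} for a self-inverse u <> 1 gives the graph of the involution that
   exchanges 1 and u, whose connectivity is still at least n - 2, while a
   non-self-inverse element has degree n - 2. *)

Section EdgeConnectivity.
Variable T : finType.
Implicit Types (E S : {set {set T}}) (A : {set T}).

Definition edge_boundary E A : {set {set T}} :=
  [set f in E | [exists u in A, exists v in ~: A, f == [set u; v]]].

Definition nbhd E (v : T) : {set T} := [set w | [set v; w] \in E].

Definition pair_edges E := forall f, f \in E -> exists x y, f = [set x; y].

Lemma edge_cutset_boundary E S : 1 < #|T| -> edge_cutset E S ->
  exists A, [/\ 0 < #|A|, 0 < #|~: A| & edge_boundary E A \subset S].
Proof.
move=> T_gt1 /andP[_ /orP[]]; last by move/eqP=> T1; rewrite T1 in T_gt1.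
rewrite /connectedb negb_forall => /existsP[x]; rewrite negb_forall => /existsP[y xy].
exists [set z | connect (adj (E :\: S)) x z]; split.
- by apply/card_gt0P; exists x; rewrite inE connect0.
- by apply/card_gt0P; exists y; rewrite !inE.
apply/subsetP => f /setIdP[fE /existsP[u /andP[ux /existsP[v /andP[vx /eqP fuv]]]]].
rewrite !inE in ux vx; apply: contraR vx => fS.
by apply: connect_trans ux (connect1 _); rewrite /adj !inE -fuv fS.
Qed.

Lemma set2_injr (v w w' : T) : [set v; w] = [set v; w'] -> w = w'.
Proof.
move=> e; have : w \in [set v; w'] by rewrite -e set22.
rewrite in_set2 => /orP[/eqP wv|/eqP //].
have : w' \in [set v; w] by rewrite e set22.
by rewrite in_set2 wv orbb => /eqP.
Qed.

Lemma eq_set2r (v w w' : T) : ([set v; w] == [set v; w']) = (w == w').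
Proof. by apply/eqP/eqP => [/set2_injr | ->]. Qed.

Lemma bigmin_le (I : eqType) (r : seq I) (P : pred I) (F : I -> nat) m i :
  i \in r -> P i -> \big[minn/m]_(j <- r | P j) F j <= F i.
Proof.
move=> + Pi; elim: r => // j r IHr; rewrite inE big_cons => /orP[/eqP<-|/IHr ri].
  by rewrite Pi geq_minl.
by case: (P j); rewrite // geq_min ri orbT.
Qed.

Lemma edge_connectivity_le_cutset E S : edge_cutset E S -> edge_connectivity E <= #|S|.
Proof. by move=> ES; apply: bigmin_le; rewrite ?mem_index_enum. Qed.

Lemma edge_connectivity_ge E k : 1 < #|T| ->
  (forall A, 0 < #|A| -> 0 < #|~: A| -> k <= #|edge_boundary E A|) ->
  k <= edge_connectivity E.
Proof.
move=> T_gt1 kE; apply: (big_ind (fun m => k <= m)).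
- have [x _] : exists x : T, x \in T by apply/card_gt0P; apply: ltnW.
  apply: leq_trans (kE [set x] _ _) _; rewrite ?cards1 ?cardsC1 -?subn1 ?subn_gt0 //.
  by apply: subset_leq_card; apply/subsetP => f /setIdP[].
- by move=> m1 m2; rewrite leq_min => -> ->.
- move=> S /(edge_cutset_boundary T_gt1)[A [A_gt0 CA_gt0 AS]].
  exact: leq_trans (kE A A_gt0 CA_gt0) (subset_leq_card AS).
Qed.

Lemma edge_boundary_setD1 E e A :
  #|edge_boundary E A| <= (#|edge_boundary (E :\ e) A|).+1.
Proof.
rewrite (cardsD1 e) -addn1 addnC leq_add ?leq_b1 //; apply: subset_leq_card.
by apply/subsetP => f; rewrite !inE => /andP[-> /andP[-> ->]].
Qed.

Lemma edge_connectivity_setD1_ge E e k : 1 < #|T| ->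
  (forall A, 0 < #|A| -> 0 < #|~: A| -> k <= #|edge_boundary E A|) ->
  k.-1 <= edge_connectivity (E :\ e).
Proof.
move=> T_gt1 kE; apply: edge_connectivity_ge => // A A_gt0 CA_gt0.
have := edge_boundary_setD1 E e A; have := kE A A_gt0 CA_gt0; lia.
Qed.

Lemma connectedb_edge_connectivity E : 0 < edge_connectivity E -> connectedb E.
Proof.
apply: contraTT => nE; rewrite -leqNgt -(cards0 ({set T} : finType)).
by apply: edge_connectivity_le_cutset; rewrite /edge_cutset sub0set setD0 nE.
Qed.

Lemma edge_cutset_star E v : 1 < #|T| -> edge_cutset E [set f in E | v \in f].
Proof.
move=> T_gt1; apply/andP; split; first by apply/subsetP => f /setIdP[].
apply/orP; left.
have [w wv] : exists w, w != v.
  have [x [y [_ _ xy]]] := card_gt1P T_gt1.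
  by case: (eqVneq x v) => [<-|]; [exists y; rewrite eq_sym | exists x].
apply/negP => /forallP/(_ v)/forallP/(_ w)/connectP[[_ /= /eqP|z p /= /andP[vz _] _]].
  by rewrite (negbTE wv).
by move: vz; rewrite /adj !inE eqxx andbT => /andP[/negP].
Qed.

Lemma edge_connectivity_le_nbhd E v : 1 < #|T| -> pair_edges E ->
  edge_connectivity E <= #|nbhd E v|.
Proof.
move=> T_gt1 pE; apply: leq_trans (edge_connectivity_le_cutset (edge_cutset_star E v T_gt1)) _.
apply: leq_trans (leq_imset_card (fun w => [set v; w]) _); apply: subset_leq_card.
apply/subsetP => f /setIdP[fE vf]; have [x [y exy]] := pE f fE.
have [w fvw] : exists w, f = [set v; w].
  by move: vf; rewrite exy in_set2 => /orP[]/eqP->; [exists y | exists x; rewrite setUC].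
by apply/imsetP; exists w; rewrite // inE -fvw.
Qed.

Lemma pair_edges_setD1 E e : pair_edges E -> pair_edges (E :\ e).
Proof. by move=> pE f /setD1P[_ /pE]. Qed.

Lemma pair_edges_ext E1 E2 : pair_edges E1 -> pair_edges E2 ->
  (forall x y, ([set x; y] \in E1) = ([set x; y] \in E2)) -> E1 = E2.
Proof.
move=> pE1 pE2 E12; apply/eqP; rewrite eqEsubset; apply/andP; split; apply/subsetP.
  by move=> f fE1; have [x [y fxy]] := pE1 f fE1; rewrite fxy -E12 -fxy.
by move=> f fE2; have [x [y fxy]] := pE2 f fE2; rewrite fxy E12 -fxy.
Qed.

Lemma nbhd_setD1 E v w : nbhd (E :\ [set v; w]) v = nbhd E v :\ w.
Proof. by apply/setP => w'; rewrite !inE eq_set2r. Qed.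

Lemma edge_connectivity_setD1_le_nbhd E v w : 1 < #|T| -> pair_edges E ->
  [set v; w] \in E -> edge_connectivity (E :\ [set v; w]) <= #|nbhd E v|.-1.
Proof.
move=> T_gt1 pE vwE; have w_nbhd : w \in nbhd E v by rewrite inE.
rewrite (cardsD1 w) w_nbhd add1n -nbhd_setD1.
exact: edge_connectivity_le_nbhd v T_gt1 (pair_edges_setD1 pE).
Qed.

Lemma min_edge_connected_of_min_degree E k : 1 < #|T| -> pair_edges E -> 0 < k ->
  (forall A, 0 < #|A| -> 0 < #|~: A| -> k <= #|edge_boundary E A|) ->
  (forall x y, [set x; y] \in E -> #|nbhd E x| <= k \/ #|nbhd E y| <= k) ->
  min_edge_connected E.
Proof.
move=> T_gt1 pE k_gt0 bound edge_deg.
have ec_setD1_le x y : [set x; y] \in E -> #|nbhd E x| <= k ->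
    edge_connectivity (E :\ [set x; y]) <= k.-1.
  move=> xyE x_deg; apply: leq_trans (edge_connectivity_setD1_le_nbhd T_gt1 pE xyE) _.
  by rewrite -!subn1 leq_sub2r.
have [v v_deg] : exists v, #|nbhd E v| <= k.
  have [x0 _] : exists x0 : T, x0 \in T by apply/card_gt0P; apply: ltnW.
  have [f /setIdP[fE _]] : exists f, f \in edge_boundary E [set x0].
    apply/card_gt0P; apply: leq_trans k_gt0 (bound _ _ _); rewrite ?cards1 ?cardsC1 //.
    by rewrite -subn1 subn_gt0.
  have [x [y fxy]] := pE f fE; rewrite fxy in fE.
  by have [x_deg | y_deg] := edge_deg x y fE; [exists x | exists y].
have ecE : edge_connectivity E = k.
  apply/eqP; rewrite eqn_leq edge_connectivity_ge // andbT.
  exact: leq_trans (edge_connectivity_le_nbhd v T_gt1 pE) v_deg.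
split=> [|e eE]; first by apply: connectedb_edge_connectivity; rewrite ecE.
rewrite ecE; apply/eqP; rewrite eqn_leq edge_connectivity_setD1_ge // andbT.
have [x [y exy]] := pE e eE; rewrite exy in eE *.
have [x_deg | y_deg] := edge_deg x y eE; first exact: ec_setD1_le.
by rewrite [[set x; y]]setUC; apply: ec_setD1_le; rewrite // [[set y; x]]setUC.
Qed.

Lemma not_min_edge_connected E e : 0 < edge_connectivity E -> e \in E ->
  edge_connectivity E <= edge_connectivity (E :\ e) -> ~ min_edge_connected E.
Proof. by move=> ec_gt0 eE ec_le [_ /(_ e eE) ec_setD1]; move: ec_le; rewrite ec_setD1; lia. Qed.

End EdgeConnectivity.

Section InvolutionGraph.
Variable T : finType.
Implicit Types (s : T -> T) (A : {set T}).

Definition ni_edges_of s : {set {set T}} :=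
  [set [set x; y] | x in [set: T], y in [set: T] & (x != y) && (y != s x)].

Lemma pair_edges_ni s : pair_edges (ni_edges_of s).
Proof. by move=> f /imset2P[x y _ _ ->]; exists x, y. Qed.

Lemma ni_edges_of_mem s u v : u != v -> v != s u -> [set u; v] \in ni_edges_of s.
Proof. by move=> uv vu; apply/imset2P; exists u v; rewrite ?inE ?uv ?vu. Qed.

Lemma mem_ni_edges_of s u v : involutive s ->
  ([set u; v] \in ni_edges_of s) = (u != v) && (v != s u).
Proof.
move=> sK; apply/idP/andP => [|[]]; last exact: ni_edges_of_mem.
case/imset2P=> x y _; rewrite !inE /= => /andP[xy yx] e.
have uv : u != v by have := congr1 (fun A => #|A|) e; rewrite !cards2 xy; case: (u != v).
have: u \in [set x; y] by rewrite -e set21.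
have: v \in [set x; y] by rewrite -e set22.
rewrite !in_set2 => /orP[]/eqP vxy /orP[]/eqP uxy; subst u v; rewrite ?eqxx // in uv *.
by split=> //; apply: contra yx => /eqP->; rewrite sK.
Qed.

Lemma nbhd_ni s v : involutive s -> nbhd (ni_edges_of s) v = [set~ v] :\ s v.
Proof. by move=> sK; apply/setP => w; rewrite !inE mem_ni_edges_of // andbC (eq_sym v). Qed.

Lemma card_nbhd_ni s v : involutive s ->
  #|nbhd (ni_edges_of s) v| = #|T|.-1 - (s v != v).
Proof. by move=> sK; rewrite nbhd_ni // -(cardsC1 v) (cardsD1 (s v) [set~ v]) in_setC1 addKn. Qed.

Definition cut_pairs s A : {set T * T} := [set p in setX A (~: A) | p.2 == s p.1].

Lemma card_edge_boundary_ni s A :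
  #|A| * #|~: A| <= #|edge_boundary (ni_edges_of s) A| + #|cut_pairs s A|.
Proof.
rewrite -cardsX -(cardsID (cut_pairs s A) (setX A (~: A))) addnC leq_add //; last first.
  by apply: subset_leq_card; apply: subsetIr.
have inj_pair : {in setX A (~: A) :\: cut_pairs s A &, injective (fun p => [set p.1; p.2])}.
  move=> [u1 v1] [u2 v2]; rewrite !inE /= => /andP[_ /andP[u1A v1A]] /andP[_ /andP[u2A v2A]] e.
  have: u1 \in [set u2; v2] by rewrite -e set21.
  have: v1 \in [set u2; v2] by rewrite -e set22.
  rewrite !in_set2 => /orP[]/eqP v12 /orP[]/eqP u12; subst u1 v1 => //.
  - by rewrite u2A in v1A.
  - by rewrite u1A in v2A.
  - by rewrite u1A in v2A.
rewrite -(card_in_imset inj_pair); apply: subset_leq_card.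
apply/subsetP => f /imsetP[[u v]]; rewrite !inE /= => /andP[vsu /andP[uA vA]] ->.
have uv : u != v by apply: contraNneq vA => <-.
rewrite ni_edges_of_mem //; last by rewrite uA vA in vsu.
by apply/existsP; exists u; rewrite uA; apply/existsP; exists v; rewrite inE vA /=.
Qed.

Lemma card_cut_pairs_le s A : #|cut_pairs s A| <= #|A|.
Proof.
have inj_fst : {in cut_pairs s A &, injective (fun p => p.1)}.
  by move=> [u1 v1] [u2 v2]; rewrite !inE /= => /andP[_ /eqP->] /andP[_ /eqP->] ->.
rewrite -(card_in_imset inj_fst); apply: subset_leq_card.
by apply/subsetP => u /imsetP[p]; rewrite !inE => /andP[/andP[]] + _ _ ->.
Qed.

Lemma card_cut_pairs_leC s A : injective s -> #|cut_pairs s A| <= #|~: A|.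
Proof.
move=> s_inj; have inj_snd : {in cut_pairs s A &, injective (fun p => p.2)}.
  move=> [u1 v1] [u2 v2]; rewrite !inE /= => /andP[_ /eqP->] /andP[_ /eqP->] /= e.
  by rewrite (s_inj _ _ e).
rewrite -(card_in_imset inj_snd); apply: subset_leq_card.
by apply/subsetP => u /imsetP[p]; rewrite !inE => /andP[/andP[]] _ + _ ->.
Qed.

Lemma cut_pairs_id s A : (forall x, s x = x) -> cut_pairs s A = set0.
Proof.
move=> sid; apply/setP => -[u v]; rewrite !inE /= sid.
by apply/negP => /andP[/andP[uA vA] /eqP vu]; rewrite vu uA in vA.
Qed.

Lemma edge_boundary_ni_ge s A : involutive s -> 0 < #|A| -> 0 < #|~: A| ->
  #|T| - 2 <= #|edge_boundary (ni_edges_of s) A|.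
Proof.
move=> sK A_gt0 CA_gt0; rewrite -(cardsC A).
have := card_edge_boundary_ni s A; have := card_cut_pairs_le s A.
have := card_cut_pairs_leC A (inv_inj sK).
move: #|A| #|~: A| #|cut_pairs s A| A_gt0 CA_gt0 => a b q a_gt0 b_gt0 qb qa.
(* a * b - min a b >= a + b - 2 once a, b >= 1 *)
have : q <= (a - 1) * (b - 1) + 1 by case: (leqP a b) => ab; nia.
nia.
Qed.

Lemma edge_boundary_ni_id_ge s A : (forall x, s x = x) -> 0 < #|A| -> 0 < #|~: A| ->
  #|T| - 1 <= #|edge_boundary (ni_edges_of s) A|.
Proof.
move=> sid A_gt0 CA_gt0; rewrite -(cardsC A).
have := card_edge_boundary_ni s A; rewrite cut_pairs_id // cards0 addn0; nia.
Qed.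

Lemma edge_connectivity_ni_ge s : involutive s -> 1 < #|T| ->
  #|T| - 2 <= edge_connectivity (ni_edges_of s).
Proof. by move=> sK T_gt1; apply: edge_connectivity_ge => // A; apply: edge_boundary_ni_ge. Qed.

Definition match_fixed s (a u : T) x := if x == a then u else if x == u then a else s x.

Lemma match_fixed_involutive s a u : involutive s -> s a = a -> s u = u ->
  involutive (match_fixed s a u).
Proof.
move=> sK sa su x; rewrite /match_fixed.
case: (eqVneq x a) => [->|xa]; first by rewrite eqxx; case: eqVneq.
case: (eqVneq x u) => [->|xu]; first by rewrite eqxx.
rewrite (inv_eq sK) sa (negbTE xa) (inv_eq sK) su (negbTE xu); exact: sK.
Qed.

Lemma ni_edges_of_match_fixed s a u : involutive s -> s a = a -> s u = u -> a != u ->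
  ni_edges_of s :\ [set a; u] = ni_edges_of (match_fixed s a u).
Proof.
move=> sK sa su au; have mK := match_fixed_involutive sK sa su.
apply: pair_edges_ext; [exact/pair_edges_setD1/pair_edges_ni | exact: pair_edges_ni | move=> x y].
rewrite in_setD1 !mem_ni_edges_of // /match_fixed.
case: (eqVneq x a) => [->|xa].
  by rewrite (eq_set2r a y u) sa (eq_sym a); case: (y == u); case: (y == a).
case: (eqVneq x u) => [->|xu].
  by rewrite [[set a; u]]setUC eq_set2r su (eq_sym u); case: (y == u); case: (y == a).
suff -> : [set x; y] != [set a; u] by [].
by apply: contraNneq xa => e; have := set21 x y; rewrite e in_set2 (negbTE xu) orbF.
Qed.

Lemma min_edge_connected_ni_small s : #|T| <= 1 -> min_edge_connected (ni_edges_of s).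
Proof.
move/card_le1_eqP=> T_eq; split.
  by apply/forallP => x; apply/forallP => y; rewrite (T_eq x y) ?connect0.
by move=> e /imset2P[x y _]; rewrite !inE (T_eq x y) ?eqxx.
Qed.
End InvolutionGraph.

Section NonInverseGraph.
Variable gT : finGroupType.

Lemma NI_edgesE : NI_edges gT = ni_edges_of (@inv gT).
Proof. by []. Qed.

Lemma pair_edges_NI : pair_edges (NI_edges gT).
Proof. exact: pair_edges_ni. Qed.

Lemma card_nbhd_NI (x : gT) : #|nbhd (NI_edges gT) x| = #|gT|.-1 - (x^-1 != x)%g.
Proof. by rewrite NI_edgesE card_nbhd_ni //; apply: invgK. Qed.

Lemma one_in_nbhd_NI (t : gT) : t != 1%g -> 1%g \in nbhd (NI_edges gT) t.
Proof.
move=> t1; rewrite NI_edgesE nbhd_ni ?inE; last exact: invgK.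
by rewrite eq_sym eq_invg1 (eq_sym (1%g : gT)) t1.
Qed.

Lemma min_edge_connected_NI_all_selfinv :
  (forall x : gT, x != 1%g -> (x^-1)%g = x) -> min_edge_connected (NI_edges gT).
Proof.
move=> selfinv; have [gT_le1|gT_gt1] := leqP #|gT| 1.
  exact: min_edge_connected_ni_small.
have inv_id (x : gT) : (x^-1)%g = x by case: (eqVneq x 1%g) => [->|/selfinv//]; rewrite invg1.
apply: (min_edge_connected_of_min_degree (k := #|gT| - 1)) => //.
- exact: pair_edges_NI.
- by rewrite subn_gt0.
- by move=> A; apply: edge_boundary_ni_id_ge.
- by move=> x y _; left; rewrite card_nbhd_NI inv_id eqxx subn0 subn1.
Qed.

Lemma min_edge_connected_NI_no_selfinv :
  (forall x : gT, x != 1%g -> (x^-1)%g != x) -> min_edge_connected (NI_edges gT).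
Proof.
move=> no_selfinv; have [gT_le1|gT_gt1] := leqP #|gT| 1.
  exact: min_edge_connected_ni_small.
have deg_nontriv (x : gT) : x != 1%g -> #|nbhd (NI_edges gT) x| = #|gT| - 2.
  by move=> x1; rewrite card_nbhd_NI no_selfinv //=; lia.
have [t t1] : exists t : gT, t != 1%g.
  have [x [y [_ _ xy]]] := card_gt1P gT_gt1.
  by case: (eqVneq x 1%g) => [x1|]; [exists y; rewrite -x1 eq_sym | exists x].
apply: (min_edge_connected_of_min_degree (k := #|gT| - 2)) => //.
- exact: pair_edges_NI.
- by rewrite -(deg_nontriv t t1); apply/card_gt0P; exists 1%g; apply: one_in_nbhd_NI.
- by move=> A; apply: edge_boundary_ni_ge; apply: invgK.
move=> x y; rewrite NI_edgesE mem_ni_edges_of => [/andP[xy _]|]; last exact: invgK.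
have [x1|x1] := eqVneq x 1%g; last by left; rewrite deg_nontriv.
by right; rewrite deg_nontriv // -x1 eq_sym.
Qed.

Lemma NI_edges_setD1_selfinv (u : gT) : u != 1%g -> (u^-1)%g = u ->
  NI_edges gT :\ [set 1%g; u] = ni_edges_of (match_fixed (@inv gT) 1%g u).
Proof.
by move=> u1 u_si; apply: ni_edges_of_match_fixed; [apply: invgK | apply: invg1 | | rewrite eq_sym].
Qed.

Lemma not_min_edge_connected_NI (t u : gT) : (t^-1)%g != t -> u != 1%g -> (u^-1)%g = u ->
  ~ min_edge_connected (NI_edges gT).
Proof.
move=> t_ns u1 u_si; have t1 : t != 1%g by apply: contraNneq t_ns => ->; rewrite invg1.
have gT_gt1 : 1 < #|gT| by apply/card_gt1P; exists t, 1%g.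
have deg_t : #|nbhd (NI_edges gT) t| = #|gT| - 2 by rewrite card_nbhd_NI t_ns /=; lia.
have ec_le := edge_connectivity_le_nbhd t gT_gt1 pair_edges_NI; rewrite deg_t in ec_le.
have ec_ge := edge_connectivity_ni_ge (@invgK gT) gT_gt1.
have := edge_connectivity_ni_ge (match_fixed_involutive (@invgK gT) (invg1 gT) u_si) gT_gt1.
rewrite -NI_edges_setD1_selfinv // => ec_setD1_ge.
apply: (not_min_edge_connected (e := [set 1%g; u])).
- apply: leq_trans ec_ge; rewrite -deg_t; apply/card_gt0P; exists 1%g.
  exact: one_in_nbhd_NI.
- by rewrite NI_edgesE; apply: ni_edges_of_mem; [rewrite eq_sym | rewrite invg1].
- exact: leq_trans ec_le ec_setD1_ge.
Qed.

End NonInverseGraph.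

Theorem mainTheorem6 (gT : finGroupType) :
  min_edge_connected (NI_edges gT) <->
  (forall x : gT, x != 1%g -> (x^-1)%g = x) \/
  (forall x : gT, x != 1%g -> (x^-1)%g != x).
Proof.
split; last first.
  by case; [apply: min_edge_connected_NI_all_selfinv | apply: min_edge_connected_NI_no_selfinv].
move=> NI_mec; case: (pickP (fun t : gT => (t != 1%g) && ((t^-1)%g != t))).
  move=> t /andP[_ t_ns]; right=> u u1; apply/eqP => u_si.
  exact: not_min_edge_connected_NI t_ns u1 u_si NI_mec.
by move=> all_si; left=> x x1; apply/eqP; move: (all_si x); rewrite x1 => /negbFE.
Qed.
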